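(* Let $G$ be a discriminating group and let $\mathcal{S}$ be a $T$-subgroup of $F$ which consists of weak* identities in $G$ modulo the trivial $T$-subgroup $\{1\}$. Then every element of $\mathcal{S}$ is an identity in $G$, i.e. $\pi(s)=1$ for all $s\in\mathcal{S}$ and all homomorphisms $\pi:F\to G$.
   Context: A group $G$ is discriminating if for every integer $N$ and every $h_1,\dots,h_N\in G\times G$ there is a homomorphism $\rho:G\times G\to G$ with $\rho(h_i)=1$ if and only if $h_i=1$, for each $i$. Let $F$ be the free group on countably many generators $g_1,g_2,\dots$. For $N\ge 1$, $F^{\times N}$ is the direct product of $N$ copies of $F$, $i_k:F\to F^{\times N}$ the $k$-th inclusion. A subset $S\subset F$ is a set of weak identities in a group $G$ if there exists $N\ge1$ such that for any $s_1,\dots,s_N\in S$ and any homomorphism $\rho:F^{\times N}\to G$ some $k$ has $\rho(i_k(s_k))=1$. A $T$-subgroup of $F$ is a subgroup preserved by all endomorphisms of $F$. For a $T$-subgroup $\mathcal{H}$, $\mathcal{H}(G)=\{\pi(h):h\in\mathcal{H},\ \pi:F\to G\text{ a homomorphism}\}$. $S$ consists of weak identities modulo $\mathcal{H}$ in $G$ if $S$ is a set of weak identities in $G/\mathcal{H}(G)$. A $T$-subgroup $\mathcal{S}$ consists of weak* identities in $G$ modulo a $T$-subgroup $\mathcal{H}$ if there exist $m\ge0$ and $T$-subgroups $\mathcal{S}_0=\mathcal{S},\dots,\mathcal{S}_m=\mathcal{H}$ such that $\mathcal{S}_{j-1}$ consists of weak identities modulo $\mathcal{S}_j$ in $G$ for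 all $j=1,\dots,m$. *)

From mathcomp Require Import all_boot.
Set Implicit Arguments. Unset Strict Implicit. Unset Printing Implicit Defensive.

Record Grp := {
  car :> Type;
  gmul : car -> car -> car;
  ginv : car -> car;
  gone : car;
  gmulA : forall x y z, gmul x (gmul y z) = gmul (gmul x y) z;
  gmul1 : forall x, gmul gone x = x;
  gmulV : forall x, gmul (ginv x) x = gone
}.
Arguments gmul {g}. Arguments ginv {g}. Arguments gone {g}.

Definition is_hom (G H : Grp) (f : G -> H) : Prop :=
  forall x y, f (gmul x y) = gmul (f x) (f y).

Definition is_free (F : Grp) (g : nat -> F) : Prop :=
  forall (H : Grp) (f : nat -> H),
    exists phi : F -> H, [/\ is_hom phi, (forall n, phi (g n) = f n) &
      forall psi : F -> H, is_hom psi -> (forall n, psi (g n) = f n) ->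
        forall x, psi x = phi x].

Definition pmul2 (G : Grp) (a b : G * G) : G * G := (gmul a.1 b.1, gmul a.2 b.2).

Definition discriminating (G : Grp) : Prop :=
  forall (N : nat) (h : 'I_N -> G * G),
    exists rho : G * G -> G,
      (forall a b, rho (pmul2 a b) = gmul (rho a) (rho b)) /\
      forall i, rho (h i) = gone <-> h i = (gone, gone).

(* F^{x N} as functions 'I_N -> F with pointwise multiplication; i_k the
   k-th inclusion. *)
Definition pmulN (F : Grp) (N : nat) (x y : 'I_N -> F) : 'I_N -> F :=
  fun j => gmul (x j) (y j).
Definition incl (F : Grp) (N : nat) (k : 'I_N) (a : F) : 'I_N -> F :=
  fun j => if j == k then a else gone.

Definition T_subgroup (F : Grp) (S : F -> Prop) : Prop :=
  [/\ S gone, (forall x y, S x -> S y -> S (gmul x y)),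
      (forall x, S x -> S (ginv x)) &
      (forall e : F -> F, is_hom e -> forall x, S x -> S (e x))].

(* H(G) = { pi(h) : h in H, pi : F -> G a homomorphism } *)
Definition verbal (F G : Grp) (H : F -> Prop) (x : G) : Prop :=
  exists h (pi : F -> G), [/\ H h, is_hom pi & pi h = x].

(* S is a set of weak identities modulo H in G, i.e. weak identities in the
   quotient G / H(G).  A homomorphism F^{x N} -> G/H(G) is represented by a
   set-theoretic lift phi : F^{x N} -> G that is multiplicative modulo H(G)
   (every homomorphism to the quotient has such a lift, and every such map
   induces one); "rho(y) = 1 in G/H(G)" means "phi y in H(G)". *)
Definition weak_ids_mod (F G : Grp) (S H : F -> Prop) : Prop :=
  exists N : nat, 1 <= N /\
    forall s : 'I_N -> F, (forall k, S (s k)) ->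
    forall phi : ('I_N -> F) -> G,
      (forall x y, verbal H (gmul (phi (pmulN x y)) (ginv (gmul (phi x) (phi y))))) ->
      exists k : 'I_N, verbal H (phi (incl k (s k))).

Definition weak_star_ids_mod (F G : Grp) (S H : F -> Prop) : Prop :=
  exists (m : nat) (Ss : nat -> F -> Prop),
    [/\ (forall x, Ss 0 x <-> S x), (forall x, Ss m x <-> H x),
        (forall j, j <= m -> T_subgroup (Ss j)) &
        (forall j, 1 <= j <= m -> weak_ids_mod G (Ss j.-1) (Ss j))].

Definition trivT (F : Grp) : F -> Prop := fun x => x = gone.

(** Since G is discriminating, so is every finite power G^N: one homomorphism
    G^N -> G keeps alive any finitely many nontrivial elements.  Composing
    such a map with pi^N : F^N -> G^N gives a genuine homomorphism, to which
    the weak identity s (taken in every coordinate) applies: it kills some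
    i_k(s), and hence pi s = 1.  This shows that weak identities modulo a set
    of identities are identities, and one walks down the chain
    S_m = {1}, ..., S_0 = S. *)
From Stdlib Require Import FunctionalExtensionality.
From mathcomp Require Import all_boot.
Set Implicit Arguments. Unset Strict Implicit. Unset Printing Implicit Defensive.

Lemma gmulVr (G : Grp) (x : G) : gmul x (ginv x) = gone.
Proof.
rewrite -[gmul x _]gmul1 -[in LHS](gmulV (ginv x)).
by rewrite -gmulA [gmul (ginv x) (gmul x _)]gmulA gmulV gmul1 gmulV.
Qed.

Lemma hom1 (G H : Grp) (f : G -> H) : is_hom f -> f gone = gone.
Proof.
move=> hom_f.
have f1_idem : f gone = gmul (f gone) (f gone) by rewrite -hom_f gmul1.
by rewrite -(gmulV (f gone)) {3}f1_idem gmulA gmulV gmul1.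
Qed.

Lemma discriminating_pow (G : Grp) (N M : nat) (h : 'I_M -> 'I_N -> G) :
  discriminating G ->
  exists rho : ('I_N -> G) -> G,
    (forall x y, rho (pmulN x y) = gmul (rho x) (rho y)) /\
    forall i, rho (h i) = gone -> forall j, h i j = gone.
Proof.
move=> discrG; elim: N h => [|N IHN] h.
  exists (fun _ => gone); split=> [x y|i _ []//]; by rewrite gmul1.
pose tail (x : 'I_N.+1 -> G) j := x (lift ord0 j).
have [rhoN [homN kerN]] := IHN (fun i => tail (h i)).
have [rho2 [hom2 ker2]] := discrG M (fun i => (h i ord0, rhoN (tail (h i)))).
exists (fun x => rho2 (x ord0, rhoN (tail x))); split=> [x y|i].
  by rewrite -hom2 /pmul2 /= -homN.
move=> /ker2 [h0 htail] j; case: (unliftP ord0 j) => [j'|] ->; first exact: kerN.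
exact: h0.
Qed.

Definition identities (F G : Grp) (S : F -> Prop) : Prop :=
  forall s, S s -> forall pi : F -> G, is_hom pi -> pi s = gone.

Lemma identities_trivT (F G : Grp) : identities G (@trivT F).
Proof. by move=> s -> pi /hom1. Qed.

Lemma verbal_identities (F G : Grp) (H : F -> Prop) (x : G) :
  identities G H -> verbal H x -> x = gone.
Proof. by move=> idH [h [pi [Hh hom_pi <-]]]; exact: idH. Qed.

Lemma weak_ids_mod_identities (F G : Grp) (S H : F -> Prop) :
  discriminating G -> H gone -> identities G H -> weak_ids_mod G S H ->
  identities G S.
Proof.
move=> discrG H1 idH [N [_ weakS]] s Ss pi hom_pi.
have [rho [hom_rho ker_rho]] :=
  discriminating_pow (fun k : 'I_N => incl k (pi s)) discrG.
pose phi (y : 'I_N -> F) := rho (fun j => pi (y j)).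
have hom_phi x y : phi (pmulN x y) = gmul (phi x) (phi y).
  rewrite /phi -hom_rho; congr rho; apply: functional_extensionality => j.
  exact: hom_pi.
have [k /verbal_identities-/(_ idH) phi_k] : exists k, verbal H (phi (incl k s)).
  apply: (weakS (fun _ => s)) => // x y.
  rewrite hom_phi gmulVr.
  by exists gone, (fun _ => gone); split=> // ? ?; rewrite gmul1.
have phi_incl : phi (incl k s) = rho (incl k (pi s)).
  rewrite /phi; congr rho; apply: functional_extensionality => j.
  by rewrite /incl; case: (j == k); last exact: hom1.
have := ker_rho k; rewrite -phi_incl => /(_ phi_k k).
by rewrite /incl eqxx.
Qed.

Lemma weak_star_ids_mod_identities (F G : Grp) (S H : F -> Prop) :
  discriminating G -> identities G H -> weak_star_ids_mod G S H ->
  identities G S.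
Proof.
move=> discrG idH [m [Ss [S0 Sm T_Ss weak_Ss]]].
suff idSs k j : j + k = m -> identities G (Ss j).
  by move=> s /S0; apply: (idSs m 0).
elim: k j => [|k IHk] j; rewrite ?addn0 => def_m.
  by move=> s Ss_s; apply: idH; apply/Sm; rewrite -def_m.
have le_j1m : j.+1 <= m by rewrite -def_m addnS ltnS leq_addr.
have [T1 _ _ _] := T_Ss j.+1 le_j1m.
apply: (weak_ids_mod_identities discrG T1); first by apply: IHk; rewrite addSnnS.
exact: (weak_Ss j.+1).
Qed.

Theorem corollary6p5 (F : Grp) (g : nat -> F) (HF : is_free g)
  (G : Grp) (HG : discriminating G) (S : F -> Prop) (HS : T_subgroup S)
  (Hw : weak_star_ids_mod G S (@trivT F)) :
  forall s, S s -> forall pi : F -> G, is_hom pi -> pi s = gone.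
Proof.
exact: weak_star_ids_mod_identities HG (@identities_trivT F G) Hw.
Qed.
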